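(* Let $D\subseteq\mathbb{R}^3\setminus\{0\}$ be open, $\Omega=\mathbb{R}^3\times D$, and let $\vec\mu(\vec M,\vec\gamma)=\vec\nu(\vec\gamma,\vec M\cdot\vec\gamma)$ with $\vec\nu:D\times\mathbb{R}\to\mathbb{R}^3$ smooth. A smooth function $C:\Omega\to\mathbb{R}$ satisfies $\Pi_{\vec\mu}\nabla C=0$ on $\Omega$ (i.e. $C$ is a Casimir function of $\Pi_{\vec\mu}$) if and only if there is a smooth $F:D\times\mathbb{R}\to\mathbb{R}$ with $C(\vec M,\vec\gamma)=F(\vec\gamma,\vec M\cdot\vec\gamma)$ and $$\vec\gamma\times\big((\partial_sF)(\vec\gamma,s)\,\vec\nu(\vec\gamma,s)-\nabla_{\vec\gamma}F(\vec\gamma,s)\big)=\vec 0\quad\text{for all }(\vec\gamma,s)\in D\times\mathbb{R},$$ where $\nabla_{\vec\gamma}F$ is the gradient in $\vec\gamma$ with $s$ held fixed. In particular $C_1=\tfrac12|\vec\gamma|^2$ is always a Casimir function of $\Pi_{\vec\mu}$.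
   Context: Coordinates on $\mathbb{R}^6$ are $(\vec M,\vec\gamma)=(M_1,M_2,M_3,\gamma_1,\gamma_2,\gamma_3)$. For a smooth $\vec\mu=(\mu_1,\mu_2,\mu_3)$ of $(\vec M,\vec\gamma)$, $\Pi_{\vec\mu}$ is the skew-symmetric $6\times6$ matrix $$\Pi_{\vec\mu}=\begin{bmatrix}0&-M_3-\mu_3&M_2+\mu_2&0&-\gamma_3&\gamma_2\\ M_3+\mu_3&0&-M_1-\mu_1&\gamma_3&0&-\gamma_1\\ -M_2-\mu_2&M_1+\mu_1&0&-\gamma_2&\gamma_1&0\\ 0&-\gamma_3&\gamma_2&0&0&0\\ \gamma_3&0&-\gamma_1&0&0&0\\ -\gamma_2&\gamma_1&0&0&0&0\end{bmatrix},$$ and $\{f,g\}_{\vec\mu}=(\nabla f)^T\Pi_{\vec\mu}\nabla g$ for smooth $f,g$ (gradient in all six variables). *)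

From Stdlib Require Import Reals.
From mathcomp Require Import ssreflect ssrbool eqtype ssrnat fintype.
Open Scope R_scope.

Definition pt (n : nat) := 'I_n -> R.

Definition upd {n} (x : pt n) (i : 'I_n) (t : R) : pt n :=
  fun j => if j == i then t else x j.

Definition is_open {n} (U : pt n -> Prop) : Prop :=
  forall x, U x -> exists d, d > 0 /\
    forall y : pt n, (forall i, Rabs (y i - x i) < d) -> U y.

Definition cont_on {n} (U : pt n -> Prop) (f : pt n -> R) : Prop :=
  forall x, U x -> forall eps, eps > 0 -> exists d, d > 0 /\
    forall y, U y -> (forall i, Rabs (y i - x i) < d) -> Rabs (f y - f x) < eps.

Definition partial_is {n} (f : pt n -> R) (i : 'I_n) (x : pt n) (l : R) : Prop :=
  derivable_pt_lim (fun t => f (upd x i t)) (x i) l.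

Fixpoint Ck {n} (k : nat) (U : pt n -> Prop) (f : pt n -> R) : Prop :=
  match k with
  | O => cont_on U f
  | S k' => cont_on U f /\
      forall i : 'I_n, exists g : pt n -> R,
        (forall x, U x -> partial_is f i x (g x)) /\ Ck k' U g
  end.

Definition smooth_on {n} (U : pt n -> Prop) (f : pt n -> R) : Prop :=
  forall k, Ck k U f.

Definition v3 (a b c : R) : pt 3 :=
  fun i => match nat_of_ord i with 0%nat => a | 1%nat => b | _ => c end.
Definition c0 (v : pt 3) : R := v (inord 0).
Definition c1 (v : pt 3) : R := v (inord 1).
Definition c2 (v : pt 3) : R := v (inord 2).
Definition dot3 (a b : pt 3) : R := c0 a * c0 b + c1 a * c1 b + c2 a * c2 b.
Definition cross3 (a b : pt 3) : pt 3 :=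
  v3 (c1 a * c2 b - c2 a * c1 b) (c2 a * c0 b - c0 a * c2 b) (c0 a * c1 b - c1 a * c0 b).

Definition M_of (x : pt 6) : pt 3 := v3 (x (inord 0)) (x (inord 1)) (x (inord 2)).
Definition gam_of (x : pt 6) : pt 3 := v3 (x (inord 3)) (x (inord 4)) (x (inord 5)).

Definition gam4 (y : pt 4) : pt 3 := v3 (y (inord 0)) (y (inord 1)) (y (inord 2)).
Definition s4 (y : pt 4) : R := y (inord 3).
Definition join4 (g : pt 3) (s : R) : pt 4 :=
  fun j => match nat_of_ord j with
           | 0%nat => c0 g | 1%nat => c1 g | 2%nat => c2 g | _ => s end.

Definition Pi (M g mu : pt 3) (i j : 'I_6) : R :=
  let m1 := c0 M + c0 mu in let m2 := c1 M + c1 mu in let m3 := c2 M + c2 mu in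
  let g1 := c0 g in let g2 := c1 g in let g3 := c2 g in
  match nat_of_ord i, nat_of_ord j with
  | 0, 1 => - m3 | 0, 2 => m2 | 0, 4 => - g3 | 0, 5 => g2
  | 1, 0 => m3 | 1, 2 => - m1 | 1, 3 => g3 | 1, 5 => - g1
  | 2, 0 => - m2 | 2, 1 => m1 | 2, 3 => - g2 | 2, 4 => g1
  | 3, 1 => - g3 | 3, 2 => g2
  | 4, 0 => g3 | 4, 2 => - g1
  | 5, 0 => - g2 | 5, 1 => g1
  | _, _ => 0%R
  end%nat.

Definition mulv6 (P : 'I_6 -> 'I_6 -> R) (v : pt 6) (i : 'I_6) : R :=
  P i (inord 0) * v (inord 0) + P i (inord 1) * v (inord 1)
  + P i (inord 2) * v (inord 2) + P i (inord 3) * v (inord 3)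
  + P i (inord 4) * v (inord 4) + P i (inord 5) * v (inord 5).

Definition mu_of (nu : pt 4 -> pt 3) (x : pt 6) : pt 3 :=
  nu (join4 (gam_of x) (dot3 (M_of x) (gam_of x))).

Definition Omega (D : pt 3 -> Prop) (x : pt 6) : Prop := D (gam_of x).
Definition DxR (D : pt 3 -> Prop) (y : pt 4) : Prop := D (gam4 y).

Definition casimir (D : pt 3 -> Prop) (nu : pt 4 -> pt 3) (C : pt 6 -> R) : Prop :=
  forall x, Omega D x -> forall gradC : pt 6,
    (forall i, partial_is C i x (gradC i)) ->
    forall i, mulv6 (Pi (M_of x) (gam_of x) (mu_of nu x)) gradC i = 0.

(* In block form, Pi_mu (a, b) = ((M + mu) x a + gamma x b, gamma x a) for a, b in R^3.
   If C is a Casimir, its M-gradient is therefore parallel to gamma, so C is constant along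
   the segments in M-space orthogonal to gamma, i.e. on the fibres of
   psi (M, gamma) = (gamma, M . gamma); thus C = F o psi with F = C o chi for the smooth right
   inverse chi (gamma, s) = (s gamma / |gamma|^2, gamma) of psi.  Conversely, for C = F o psi the
   chain rule gives grad_M C = (d_s F) gamma and grad_gamma C = grad_gamma F + (d_s F) M, and
   then the first block of Pi_mu grad C is - gamma x ((d_s F) nu - grad_gamma F) while the
   second vanishes.  The multivariate chain rule behind both directions is proved from the
   mean value theorem, one coordinate at a time. *)

From Stdlib Require Import Reals Lra FunctionalExtensionality IndefiniteDescription.
From mathcomp Require Import ssreflect ssrbool eqtype ssrnat fintype.
Open Scope R_scope.

Definition lin_approx (f : R -> R) (x l : R) : Prop :=
  forall eps, eps > 0 -> exists d, d > 0 /\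
    forall h, Rabs h < d -> Rabs (f (x + h) - f x - l * h) <= eps * Rabs h.

Lemma derivable_pt_lim_lin_approx f x l :
  derivable_pt_lim f x l <-> lin_approx f x l.
Proof.
have E h : h <> 0 -> f (x + h) - f x - l * h = h * ((f (x + h) - f x) / h - l).
  by move=> h0; field.
split=> H eps he.
- case: (H eps he) => del Hd; exists del; split; first exact: cond_pos.
  move=> h hh; case: (Req_dec h 0) => [->|h0].
    by rewrite Rabs_R0 Rplus_0_r Rminus_diag Rmult_0_r Rminus_0_r Rabs_R0; lra.
  rewrite E // Rabs_mult; have := Hd h h0 hh; have := Rabs_pos_lt h h0; nra.
- have he2 : eps / 2 > 0 by lra.
  case: (H _ he2) => d [hd Hd]; exists (mkposreal _ hd) => h h0 hh /=.
  have := Hd h hh; rewrite E // Rabs_mult.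
  have := Rabs_pos_lt h h0; have := Rabs_pos ((f (x + h) - f x) / h - l); nra.
Qed.

Lemma Rabs_between a b c z r : Rmin a b <= c <= Rmax a b ->
  Rabs (a - z) < r -> Rabs (b - z) < r -> Rabs (c - z) < r.
Proof.
rewrite /Rmin /Rmax; case: (Rle_dec a b) => *; split_Rabs; lra.
Qed.

Lemma MVT_linear_bound (f f' : R -> R) a b L eps :
  (forall c, Rmin a b <= c <= Rmax a b -> derivable_pt_lim f c (f' c)) ->
  (forall c, Rmin a b <= c <= Rmax a b -> Rabs (f' c - L) <= eps) ->
  Rabs (f b - f a - L * (b - a)) <= eps * Rabs (b - a).
Proof.
wlog hab : a b / a <= b => [Hw Hd Hb|].
  case: (Rle_dec a b) => [hab|/Rnot_le_lt hba]; first exact: (Hw a b hab Hd Hb).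
  rewrite Rmin_comm Rmax_comm in Hd Hb.
  have := Hw b a (Rlt_le _ _ hba) Hd Hb.
  by rewrite -Rabs_Ropp (Rabs_minus_sym a b); congr (Rabs _ <= _); ring.
rewrite Rmin_left // Rmax_right // => Hd Hb.
case: (Req_dec a b) => [<-|hab'].
  by rewrite !Rminus_diag Rmult_0_r Rminus_0_r Rabs_R0; lra.
have [c [-> hc]] : exists c, f b - f a = f' c * (b - a) /\ a < c < b.
  by apply: MVT_cor2 => [|c hc]; [lra | apply: Hd; lra].
rewrite -Rmult_minus_distr_r Rabs_mult.
apply: Rmult_le_compat_r; [exact: Rabs_pos | apply: Hb; lra].
Qed.

Fixpoint rsum (k : nat) (f : nat -> R) : R :=
  match k with O => 0 | S k' => rsum k' f + f k' end.

Lemma rsum_ext k f g : (forall i, (i < k)%N -> f i = g i) -> rsum k f = rsum k g.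
Proof. elim: k => [|k IH] H //=; rewrite IH ?H // => i hi; apply: H; exact: ltnW. Qed.

Lemma rsum_mulr k f c : rsum k f * c = rsum k (fun i => f i * c).
Proof. elim: k => [|k IH] /=; [ring | rewrite -IH; ring]. Qed.

Lemma rsum_sub k f g : rsum k f - rsum k g = rsum k (fun i => f i - g i).
Proof. elim: k => [|k IH] /=; [ring | rewrite -IH; ring]. Qed.

Lemma rsum_abs k f : Rabs (rsum k f) <= rsum k (fun i => Rabs (f i)).
Proof.
elim: k => [|k IH] /=; first by rewrite Rabs_R0; lra.
apply: Rle_trans (Rabs_triang _ _) _; lra.
Qed.

Lemma rsum_le k f g : (forall i, (i < k)%N -> f i <= g i) -> rsum k f <= rsum k g.
Proof.
elim: k => [|k IH] H /=; first lra.
have := H k (ltnSn k); have : rsum k f <= rsum k g.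
  by apply: IH => i hi; apply: H; exact: ltnW.
lra.
Qed.

Lemma rsum_ge0 k f : (forall i, (i < k)%N -> 0 <= f i) -> 0 <= rsum k f.
Proof.
move=> H; have := rsum_le k (fun _ => 0) f H.
suff -> : rsum k (fun _ => 0) = 0 by [].
by elim: k {H} => //= k ->; ring.
Qed.

Lemma le_rsum k f i : (forall j, (j < k)%N -> 0 <= f j) -> (i < k)%N -> f i <= rsum k f.
Proof.
elim: k => [|k IH] // H /=; rewrite ltnS leq_eqVlt => /orP[/eqP ->|hi].
- have := rsum_ge0 k f (fun j hj => H j (ltnW hj)); lra.
- have := IH (fun j hj => H j (ltnW hj)) hi; have := H k (ltnSn k); lra.
Qed.

Lemma common_delta (n : nat) (P : nat -> R -> Prop) :
  (forall i d d', 0 < d' <= d -> P i d -> P i d') ->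
  (forall i, (i < n)%N -> exists d, d > 0 /\ P i d) ->
  exists d, d > 0 /\ forall i, (i < n)%N -> P i d.
Proof.
move=> Hmon; elim: n => [|n IH] H; first by exists 1; split; [lra | by []].
case: IH => [i hi|d [hd Hd]]; first by apply: H; exact: ltnW.
case: (H n (ltnSn n)) => d' [hd' Hd'].
have hm : 0 < Rmin d d' by apply: Rmin_pos.
exists (Rmin d d'); split=> // i; rewrite ltnS leq_eqVlt => /orP[/eqP ->|hi].
- by apply: Hmon Hd'; split; [| apply: Rmin_r].
- by apply: Hmon (Hd i hi); split; [| apply: Rmin_l].
Qed.

Lemma upd_upd n (x : pt n) i s t : upd (upd x i s) i t = upd x i t.
Proof. by apply: functional_extensionality => j; rewrite /upd; case: (j == i). Qed.

Lemma upd_eq n (x : pt n) i t : upd x i t i = t.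
Proof. by rewrite /upd eqxx. Qed.

Lemma upd_id n (x : pt n) i : upd x i (x i) = x.
Proof. by apply: functional_extensionality => j; rewrite /upd; case: eqP => // ->. Qed.

Lemma upd_near n (U : pt n -> Prop) x i : is_open U -> U x ->
  exists d, d > 0 /\ forall t, Rabs (t - x i) < d -> U (upd x i t).
Proof.
move=> HU Ux; case: (HU x Ux) => d [hd Hd]; exists d; split=> // t ht.
apply: Hd => j; rewrite /upd; case: eqP => [->|_] //.
by rewrite Rminus_diag Rabs_R0.
Qed.

Definition splice {n} (a b : pt n.+1) (k : nat) : pt n.+1 :=
  fun j => if (nat_of_ord j < k)%N then b j else a j.

Lemma splice0 n (a b : pt n.+1) : splice a b 0 = a.
Proof. exact: functional_extensionality. Qed.

Lemma splice_all n (a b : pt n.+1) : splice a b n.+1 = b.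
Proof. by apply: functional_extensionality => j; rewrite /splice ltn_ord. Qed.

Lemma spliceS n (a b : pt n.+1) k : (k < n.+1)%N ->
  splice a b k.+1 = upd (splice a b k) (inord k) (b (inord k)).
Proof.
move=> hk; apply: functional_extensionality => j; rewrite /splice /upd.
have -> : (j == inord k :> 'I_n.+1) = (nat_of_ord j == k).
  apply/eqP/eqP => [->|e]; first by rewrite inordK.
  by apply: val_inj; rewrite /= inordK.
rewrite ltnS leq_eqVlt; case: eqP => [ejk|] //=.
by congr (b _); apply: val_inj; rewrite /= inordK.
Qed.

Lemma splice_at n (a b : pt n.+1) k : (k < n.+1)%N -> splice a b k (inord k) = a (inord k).
Proof. by move=> hk; rewrite /splice inordK // ltnn. Qed.

Lemma splice_near n (a b : pt n.+1) k i :
  Rabs (splice a b k i - a i) <= Rabs (b i - a i).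
Proof.
rewrite /splice; case: (_ < _)%N; first lra.
rewrite Rminus_diag Rabs_R0; exact: Rabs_pos.
Qed.

Lemma curve_increment n (phi : R -> pt n.+1) t0 (dphi : nat -> R) e :
  (forall k, (k < n.+1)%N -> derivable_pt_lim (fun t => phi t (inord k)) t0 (dphi k)) ->
  0 < e <= 1 -> exists d, d > 0 /\ forall h, Rabs h < d -> forall k, (k < n.+1)%N ->
    Rabs (phi (t0 + h) (inord k) - phi t0 (inord k) - dphi k * h) <= e * Rabs h /\
    Rabs (phi (t0 + h) (inord k) - phi t0 (inord k)) <= (Rabs (dphi k) + 1) * Rabs h.
Proof.
move=> Hphi [he0 he1].
have [d [hd Hd]] : exists d, d > 0 /\ forall k, (k < n.+1)%N -> forall h, Rabs h < d ->
    Rabs (phi (t0 + h) (inord k) - phi t0 (inord k) - dphi k * h) <= e * Rabs h.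
  apply: common_delta => [i d d' hd H h hh | i hi]; first by apply: H; lra.
  exact: proj1 (derivable_pt_lim_lin_approx _ _ _) (Hphi i hi) _ he0.
exists d; split=> // h hh k hk; have H := Hd k hk h hh; split=> //.
have := Rabs_triang (phi (t0 + h) (inord k) - phi t0 (inord k) - dphi k * h) (dphi k * h).
rewrite Rabs_mult (_ : _ - _ * h + _ = phi (t0 + h) (inord k) - phi t0 (inord k)); last by ring.
have := Rmult_le_compat_r _ _ _ (Rabs_pos h) he1; lra.
Qed.

Lemma lin_approx_rsum n (phi : R -> pt n.+1) t0 (dphi c : nat -> R) :
  (forall k, (k < n.+1)%N -> derivable_pt_lim (fun t => phi t (inord k)) t0 (dphi k)) ->
  forall eps, eps > 0 -> exists d, d > 0 /\ forall h, Rabs h < d ->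
  Rabs (rsum n.+1 (fun k => c k * (phi (t0 + h) (inord k) - phi t0 (inord k) - dphi k * h)))
    <= eps * Rabs h.
Proof.
move=> Hphi eps he; set B := rsum n.+1 (fun k => Rabs (c k)).
have hB : 0 <= B by apply: rsum_ge0 => j _; exact: Rabs_pos.
set e := Rmin 1 (eps / (B + 1)).
have he' : 0 < e <= 1.
  by split; [apply: Rmin_pos; [lra | apply: Rdiv_lt_0_compat; lra] | apply: Rmin_l].
have heB : e * B <= eps.
  have : eps / (B + 1) * (B + 1) = eps by field; lra.
  have : e <= eps / (B + 1) by apply: Rmin_r.
  nra.
have [d [hd Hd]] := curve_increment _ phi t0 dphi e Hphi he'.
exists d; split=> // h hh; apply: Rle_trans (rsum_abs _ _) _.
apply: (Rle_trans _ (B * (e * Rabs h))).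
  rewrite /B rsum_mulr; apply: rsum_le => k hk; rewrite Rabs_mult.
  by apply: Rmult_le_compat_l; [exact: Rabs_pos | exact: proj1 (Hd h hh k hk)].
have := Rabs_pos h; nra.
Qed.

Section ChainRule.
Variables (n : nat) (V : pt n.+1 -> Prop) (g : pt n.+1 -> R) (gp : 'I_n.+1 -> pt n.+1 -> R).
Hypotheses (HV : is_open V) (Hgp : forall j y, V y -> partial_is g j y (gp j y))
  (Hgpc : forall j, cont_on V (gp j)).

Lemma partial_increment_bound y0 m k t r eps :
  (forall y, (forall i, Rabs (y i - y0 i) < r) -> V y /\ Rabs (gp k y - gp k y0) <= eps) ->
  (forall i, Rabs (m i - y0 i) < r) -> Rabs (t - y0 k) < r ->
  Rabs (g (upd m k t) - g m - gp k y0 * (t - m k)) <= eps * Rabs (t - m k).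
Proof.
move=> Hbox Hm ht.
have inbox c : Rmin (m k) t <= c <= Rmax (m k) t ->
    forall i, Rabs (upd m k c i - y0 i) < r.
  move=> hc i; rewrite /upd; case: eqP => [->|_]; last exact: Hm.
  exact: Rabs_between hc (Hm k) ht.
have -> : g m = g (upd m k (m k)) by rewrite upd_id.
apply: (MVT_linear_bound (fun u => g (upd m k u)) (fun u => gp k (upd m k u))) => c hc.
- have [Vc _] := Hbox _ (inbox c hc).
  have := Hgp k _ Vc; rewrite /partial_is upd_eq.
  by apply: derivable_pt_lim_ext => u; rewrite upd_upd.
- exact: proj2 (Hbox _ (inbox c hc)).
Qed.

Lemma partials_near y0 eps : V y0 -> eps > 0 -> exists r, r > 0 /\
  forall y, (forall i, Rabs (y i - y0 i) < r) ->
  V y /\ forall k, Rabs (gp k y - gp k y0) <= eps.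
Proof.
move=> Vy0 he; case: (HV y0 Vy0) => d0 [hd0 Hd0].
have [d1 [hd1 Hd1]] : exists d, d > 0 /\ forall k, (k < n.+1)%N -> forall y, V y ->
    (forall i, Rabs (y i - y0 i) < d) -> Rabs (gp (inord k) y - gp (inord k) y0) < eps.
  apply: common_delta => [i d d' hd H y Vy Hy | i _].
  - by apply: H => // j; have := Hy j; lra.
  - by case: (Hgpc (inord i) y0 Vy0 eps he) => d [hd Hd]; exists d.
exists (Rmin d0 d1); split; first exact: Rmin_pos.
move=> y Hy; have Vy : V y by apply: Hd0 => i; apply: Rlt_le_trans (Hy i) (Rmin_l _ _).
split=> // k; apply: Rlt_le; rewrite -(inord_val k); apply: Hd1 => // i.
exact: Rlt_le_trans (Hy i) (Rmin_r _ _).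
Qed.

Lemma frechet y0 : V y0 -> forall eps, eps > 0 -> exists d, d > 0 /\
  forall b : pt n.+1, (forall i, Rabs (b i - y0 i) < d) ->
  Rabs (g b - g y0 - rsum n.+1 (fun k => gp (inord k) y0 * (b (inord k) - y0 (inord k))))
    <= eps * rsum n.+1 (fun k => Rabs (b (inord k) - y0 (inord k))).
Proof.
move=> Vy0 eps he; have [r [hr Hbox]] := partials_near y0 eps Vy0 he.
exists r; split=> // b Hb.
suff : forall k, (k <= n.+1)%N ->
  Rabs (g (splice y0 b k) - g y0
        - rsum k (fun k => gp (inord k) y0 * (b (inord k) - y0 (inord k))))
    <= eps * rsum k (fun k => Rabs (b (inord k) - y0 (inord k))).
  by move/(_ n.+1 (leqnn _)); rewrite splice_all.
elim=> [|k IH] hk /=.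
  by rewrite splice0 Rminus_diag Rminus_0_r Rabs_R0 Rmult_0_r; lra.
have {}IH := IH (ltnW hk).
have step := partial_increment_bound y0 (splice y0 b k) (inord k) (b (inord k)) r eps
  (fun y Hy => conj (proj1 (Hbox y Hy)) (proj2 (Hbox y Hy) _))
  (fun i => Rle_lt_trans _ _ _ (splice_near _ _ _ _ _) (Hb i)) (Hb _).
rewrite -spliceS // splice_at // in step.
set S := rsum k _ in IH *; set a := gp (inord k) y0 * _ in step *.
have -> : g (splice y0 b k.+1) - g y0 - (S + a)
  = (g (splice y0 b k) - g y0 - S) + (g (splice y0 b k.+1) - g (splice y0 b k) - a) by ring.
apply: Rle_trans (Rabs_triang _ _) _; lra.
Qed.

Lemma frechet_along_curve (phi : R -> pt n.+1) t0 (dphi : nat -> R) : V (phi t0) ->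
  (forall k, (k < n.+1)%N -> derivable_pt_lim (fun t => phi t (inord k)) t0 (dphi k)) ->
  forall eps, eps > 0 -> exists d, d > 0 /\ forall h, Rabs h < d ->
  Rabs (g (phi (t0 + h)) - g (phi t0)
        - rsum n.+1 (fun k => gp (inord k) (phi t0) * (phi (t0 + h) (inord k) - phi t0 (inord k))))
    <= eps * Rabs h.
Proof.
move=> Vy0 Hphi eps he; set A := rsum n.+1 (fun k => Rabs (dphi k) + 1).
have hA : 0 <= A by apply: rsum_ge0 => j _; have := Rabs_pos (dphi j); lra.
have he' : eps / (A + 1) > 0 by apply: Rdiv_lt_0_compat; lra.
have [d1 [hd1 Hd1]] := frechet _ Vy0 _ he'.
have [d2 [hd2 Hd2]] := curve_increment _ phi t0 dphi 1 Hphi (conj Rlt_0_1 (Rle_refl 1)).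
exists (Rmin d2 (d1 / (A + 1))); split.
  by apply: Rmin_pos => //; apply: Rdiv_lt_0_compat; lra.
move=> h hh; have hh2 : Rabs h < d2 by apply: Rlt_le_trans hh (Rmin_l _ _).
have hh1 : (A + 1) * Rabs h < d1.
  have := Rlt_le_trans _ _ _ hh (Rmin_r _ _).
  have : d1 / (A + 1) * (A + 1) = d1 by field; lra.
  nra.
have Hlip k hk := proj2 (Hd2 h hh2 k hk).
have HsumA : rsum n.+1 (fun k => Rabs (phi (t0 + h) (inord k) - phi t0 (inord k))) <= A * Rabs h.
  by rewrite /A rsum_mulr; apply: rsum_le.
apply: Rle_trans (Hd1 _ _) _.
- move=> i; rewrite -(inord_val i); apply: Rle_lt_trans (Hlip _ (ltn_ord i)) _.
  have : Rabs (dphi i) + 1 <= A.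
    by apply: (le_rsum _ (fun k => Rabs (dphi k) + 1)) => // j _; have := Rabs_pos (dphi j); lra.
  have := Rabs_pos h; nra.
- have : eps / (A + 1) * (A + 1) = eps by field; lra.
  have := Rabs_pos h; nra.
Qed.

Lemma chain_rule (phi : R -> pt n.+1) t0 (dphi : nat -> R) : V (phi t0) ->
  (forall k, (k < n.+1)%N -> derivable_pt_lim (fun t => phi t (inord k)) t0 (dphi k)) ->
  derivable_pt_lim (fun t => g (phi t)) t0
    (rsum n.+1 (fun k => gp (inord k) (phi t0) * dphi k)).
Proof.
move=> Vy0 Hphi; apply/derivable_pt_lim_lin_approx => eps he.
have he2 : eps / 2 > 0 by lra.
have [d1 [hd1 H1]] := frechet_along_curve phi t0 dphi Vy0 Hphi _ he2.
have [d2 [hd2 H2]] := lin_approx_rsum _ phi t0 dphi (fun k => gp (inord k) (phi t0)) Hphi _ he2.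
exists (Rmin d1 d2); split=> [|h hh]; first exact: Rmin_pos.
have := H1 h (Rlt_le_trans _ _ _ hh (Rmin_l _ _)).
have := H2 h (Rlt_le_trans _ _ _ hh (Rmin_r _ _)).
set S := rsum n.+1 (fun k => gp (inord k) (phi t0) * (phi (t0 + h) (inord k) - phi t0 (inord k))).
set L := rsum n.+1 (fun k => gp (inord k) (phi t0) * dphi k).
have -> : rsum n.+1 (fun k => gp (inord k) (phi t0)
      * (phi (t0 + h) (inord k) - phi t0 (inord k) - dphi k * h)) = S - L * h.
  by rewrite /S /L rsum_mulr rsum_sub; apply: rsum_ext => i _; ring.
have := Rabs_triang (g (phi (t0 + h)) - g (phi t0) - S) (S - L * h).
rewrite (_ : _ - S + (S - L * h) = g (phi (t0 + h)) - g (phi t0) - L * h); last by ring.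
lra.
Qed.

End ChainRule.

Definition kron {n} (j i : 'I_n) : R := if j == i then 1 else 0.

Section Smoothness.
Variables (n : nat) (U : pt n -> Prop).

Lemma cont_const c : cont_on U (fun _ => c).
Proof.
move=> x _ eps he; exists 1; split; first lra.
by move=> *; rewrite Rminus_diag Rabs_R0.
Qed.

Lemma cont_proj i : cont_on U (fun y => y i).
Proof. by move=> x _ eps he; exists eps; split=> // y _; apply. Qed.

Lemma cont_plus f g : cont_on U f -> cont_on U g -> cont_on U (fun y => f y + g y).
Proof.
move=> Hf Hg x Ux eps he; have he2 : eps / 2 > 0 by lra.
case: (Hf x Ux _ he2) => d1 [hd1 H1]; case: (Hg x Ux _ he2) => d2 [hd2 H2].
exists (Rmin d1 d2); split=> [|y Uy Hy]; first exact: Rmin_pos.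
have := H1 y Uy (fun i => Rlt_le_trans _ _ _ (Hy i) (Rmin_l _ _)).
have := H2 y Uy (fun i => Rlt_le_trans _ _ _ (Hy i) (Rmin_r _ _)).
rewrite (_ : f y + g y - (f x + g x) = (f y - f x) + (g y - g x)); last by ring.
have := Rabs_triang (f y - f x) (g y - g x); lra.
Qed.

Lemma cont_mult f g : cont_on U f -> cont_on U g -> cont_on U (fun y => f y * g y).
Proof.
move=> Hf Hg x Ux eps he.
set K := Rabs (f x) + Rabs (g x) + 1.
have hK : K > 0 by rewrite /K; have := Rabs_pos (f x); have := Rabs_pos (g x); lra.
set e := Rmin 1 (eps / (2 * K)).
have he' : e > 0 by apply: Rmin_pos; [lra | apply: Rdiv_lt_0_compat; lra].
have e1 : e <= 1 by apply: Rmin_l.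
have e2 : e * K <= eps / 2.
  have : e <= eps / (2 * K) by apply: Rmin_r.
  have : eps / (2 * K) * K = eps / 2 by field; lra.
  nra.
case: (Hf x Ux _ he') => d1 [hd1 H1]; case: (Hg x Ux _ he') => d2 [hd2 H2].
exists (Rmin d1 d2); split=> [|y Uy Hy]; first exact: Rmin_pos.
have A := H1 y Uy (fun i => Rlt_le_trans _ _ _ (Hy i) (Rmin_l _ _)).
have B := H2 y Uy (fun i => Rlt_le_trans _ _ _ (Hy i) (Rmin_r _ _)).
rewrite (_ : f y * g y - f x * g x
  = (f y - f x) * (g y - g x) + f x * (g y - g x) + g x * (f y - f x)); last by ring.
apply: Rle_lt_trans (Rabs_triang _ _) _.
have := Rabs_triang ((f y - f x) * (g y - g x)) (f x * (g y - g x)); rewrite !Rabs_mult.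
have := Rabs_pos (f x); have := Rabs_pos (g x).
have := Rabs_pos (f y - f x); have := Rabs_pos (g y - g x).
rewrite /K in e2; nra.
Qed.

Lemma cont_inv f : (forall x, U x -> f x <> 0) -> cont_on U f -> cont_on U (fun y => / f y).
Proof.
move=> Hnz Hf x Ux eps he.
have hf : Rabs (f x) > 0 by apply: Rabs_pos_lt; apply: Hnz.
have hff := Rmult_lt_0_compat _ _ hf hf.
set e := Rmin (Rabs (f x) / 2) (eps * (Rabs (f x) * Rabs (f x)) / 2).
have he' : e > 0 by rewrite /e; apply: Rmin_pos; apply: Rdiv_lt_0_compat; nra.
case: (Hf x Ux _ he') => d [hd H]; exists d; split=> // y Uy Hy.
have A := H y Uy Hy.
have A1 : Rabs (f y - f x) < Rabs (f x) / 2 by apply: Rlt_le_trans A (Rmin_l _ _).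
have A2 : Rabs (f y - f x) < eps * (Rabs (f x) * Rabs (f x)) / 2.
  by apply: Rlt_le_trans A (Rmin_r _ _).
have fy : Rabs (f y) > Rabs (f x) / 2.
  by have := Rabs_triang_inv (f x) (f y); rewrite Rabs_minus_sym; lra.
have fy0 : f y <> 0 by move=> e0; rewrite e0 Rabs_R0 in fy; lra.
have fx0 := Hnz x Ux.
rewrite (_ : / f y - / f x = (f x - f y) * / (f y * f x)); last by field.
rewrite Rabs_mult Rabs_inv Rabs_mult Rabs_minus_sym.
have hp : 0 < Rabs (f y) * Rabs (f x) by nra.
apply: (Rmult_lt_reg_r (Rabs (f y) * Rabs (f x))) => //.
rewrite Rmult_assoc Rinv_l; last lra.
rewrite Rmult_1_r.
have : Rabs (f x) * Rabs (f x) / 2 <= Rabs (f y) * Rabs (f x) by nra.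
nra.
Qed.

Lemma Ck_cont k f : Ck k U f -> cont_on U f.
Proof. by case: k => [|k] //= []. Qed.

Lemma Ck_weaken k f : Ck k.+1 U f -> Ck k U f.
Proof.
elim: k f => [|k IH] f /=; first by case.
case=> hc H; split=> // i; case: (H i) => g [hg Hg]; exists g; split=> //; exact: IH.
Qed.

Lemma Ck_const k c : Ck k U (fun _ => c).
Proof.
elim: k c => [|k IH] c /=; first exact: cont_const.
split=> [|i]; first exact: cont_const.
by exists (fun _ => 0); split=> // x _; apply: derivable_pt_lim_const.
Qed.

Lemma partial_proj (x : pt n) (i j : 'I_n) : partial_is (fun y => y j) i x (kron j i).
Proof.
rewrite /partial_is /upd /kron; case: (j == i).
- exact: derivable_pt_lim_id.
- exact: derivable_pt_lim_const.
Qed.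

Lemma Ck_proj k i : Ck k U (fun y => y i).
Proof.
case: k => [|k] /=; first exact: cont_proj.
split=> [|j]; first exact: cont_proj.
by exists (fun _ => kron i j); split=> [x _|]; [exact: partial_proj | exact: Ck_const].
Qed.

Lemma Ck_plus k f g : Ck k U f -> Ck k U g -> Ck k U (fun y => f y + g y).
Proof.
elim: k f g => [|k IH] f g /=; first exact: cont_plus.
case=> cf Hf [cg Hg]; split=> [|i]; first exact: cont_plus.
case: (Hf i) => pf [hpf Cpf]; case: (Hg i) => pg [hpg Cpg].
exists (fun y => pf y + pg y); split=> [x Ux|]; last exact: IH.
exact: derivable_pt_lim_plus (hpf x Ux) (hpg x Ux).
Qed.

Lemma Ck_mult k f g : Ck k U f -> Ck k U g -> Ck k U (fun y => f y * g y).
Proof.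
elim: k f g => [|k IH] f g /=; first exact: cont_mult.
move=> Cf Cg; have Cf' := Ck_weaken k f Cf; have Cg' := Ck_weaken k g Cg.
case: Cf => cf Hf; case: Cg => cg Hg; split=> [|i]; first exact: cont_mult.
case: (Hf i) => pf [hpf Cpf]; case: (Hg i) => pg [hpg Cpg].
exists (fun y => pf y * g y + f y * pg y); split=> [x Ux|]; last by apply: Ck_plus; apply: IH.
by have := derivable_pt_lim_mult _ _ _ _ _ (hpf x Ux) (hpg x Ux); rewrite /= upd_id.
Qed.

Lemma Ck_inv k f : (forall x, U x -> f x <> 0) -> Ck k U f -> Ck k U (fun y => / f y).
Proof.
move=> Hnz; elim: k f Hnz => [|k IH] f Hnz /=; first exact: cont_inv.
move=> Cf; have Cf' := Ck_weaken k f Cf.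
case: Cf => cf Hf; split=> [|i]; first exact: cont_inv.
case: (Hf i) => pf [hpf Cpf].
exists (fun y => (-1 * pf y) * (/ f y * / f y)); split=> [x Ux|].
- have := derivable_pt_lim_div (fun _ => 1) (fun t => f (upd x i t)) (x i) 0 (pf x)
    (derivable_pt_lim_const 1 _) (hpf x Ux).
  rewrite /= upd_id => /(_ (Hnz x Ux)).
  rewrite (_ : (0 * f x - pf x * 1) / (f x)² = -1 * pf x * (/ f x * / f x)); last first.
    by rewrite /Rsqr; field; apply: Hnz.
  by apply: derivable_pt_lim_ext => t; rewrite /div_fct /Rdiv Rmult_1_l.
- by apply: Ck_mult; [apply: Ck_mult => //; apply: Ck_const | apply: Ck_mult; apply: IH].
Qed.

Lemma Ck_rsum k m (F : nat -> pt n -> R) : (forall j, (j < m)%N -> Ck k U (F j)) ->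
  Ck k U (fun x => rsum m (fun j => F j x)).
Proof.
elim: m => [|m IH] H /=; first exact: Ck_const.
by apply: Ck_plus; [apply: IH => j hj; apply: H; exact: ltnW | exact: H].
Qed.

End Smoothness.

Section Composition.
Variables (n m : nat) (U : pt n -> Prop) (V : pt m.+1 -> Prop) (phi : pt n -> pt m.+1).
Hypotheses (HV : is_open V) (HUV : forall x, U x -> V (phi x))
  (Hphi : forall j, smooth_on U (fun x => phi x j)).

Lemma cont_comp g : cont_on V g -> cont_on U (fun x => g (phi x)).
Proof.
move=> Hg x Ux eps he; case: (Hg _ (HUV x Ux) eps he) => d [hd Hd].
have [d' [hd' Hd']] : exists d', d' > 0 /\ forall k, (k < m.+1)%N -> forall y, U y ->
    (forall i, Rabs (y i - x i) < d') -> Rabs (phi y (inord k) - phi x (inord k)) < d.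
  apply: common_delta => [i a b hab H y Uy Hy | i _].
  - by apply: H => // j; have := Hy j; lra.
  - by case: (Hphi (inord i) 0%N x Ux d hd) => e [he' He]; exists e.
exists d'; split=> // y Uy Hy; apply: Hd; first exact: HUV.
by move=> i; rewrite -(inord_val i); apply: Hd'.
Qed.

Lemma Ck_comp k g : Ck k V g -> Ck k U (fun x => g (phi x)).
Proof.
elim: k g => [|k IH] g /=; first exact: cont_comp.
case=> cg Hg; split=> [|i]; first exact: cont_comp.
have [gp Hgp] := functional_choice _ Hg.
have [p Hp] : exists p : 'I_m.+1 -> pt n -> R, forall j,
    (forall x, U x -> partial_is (fun x => phi x j) i x (p j x)) /\ Ck k U (p j).
  apply: (functional_choice (fun j q => (forall x, U x -> partial_is (fun x => phi x j) i x (q x))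
    /\ Ck k U q)) => j.
  by case: (Hphi j k.+1) => _; apply.
exists (fun x => rsum m.+1 (fun l => gp (inord l) (phi x) * p (inord l) x)); split=> [x Ux|].
- have := chain_rule _ V g gp HV (fun j y Vy => proj1 (Hgp j) y Vy)
    (fun j => Ck_cont _ _ _ _ (proj2 (Hgp j))) (fun t => phi (upd x i t)) (x i)
    (fun l => p (inord l) x).
  rewrite upd_id; apply; first exact: HUV.
  by move=> l _; apply: (proj1 (Hp (inord l)) x Ux).
- apply: Ck_rsum => l _; apply: Ck_mult; last exact: proj2 (Hp _).
  exact: IH (proj2 (Hgp _)).
Qed.

End Composition.

Lemma ordE n k (hk : (k < n.+1)%N) : Ordinal hk = inord k.
Proof. by apply: val_inj; rewrite /= inordK. Qed.

Lemma ord3_cases (P : 'I_3 -> Prop) :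
  P (inord 0) -> P (inord 1) -> P (inord 2) -> forall i, P i.
Proof. by move=> H0 H1 H2 [[|[|[|?]]] hi] //; rewrite ordE. Qed.

Lemma ord4_cases (P : 'I_4 -> Prop) :
  P (inord 0) -> P (inord 1) -> P (inord 2) -> P (inord 3) -> forall i, P i.
Proof. by move=> H0 H1 H2 H3 [[|[|[|[|?]]]] hi] //; rewrite ordE. Qed.

Lemma ord6_cases (P : 'I_6 -> Prop) : P (inord 0) -> P (inord 1) -> P (inord 2) ->
  P (inord 3) -> P (inord 4) -> P (inord 5) -> forall i, P i.
Proof. by move=> H0 H1 H2 H3 H4 H5 [[|[|[|[|[|[|?]]]]]] hi] //; rewrite ordE. Qed.

Lemma inord_eqE n a b : (a < n.+1)%N -> (b < n.+1)%N ->
  (inord a == inord b :> 'I_n.+1) = (a == b).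
Proof. by move=> ha hb; apply/eqP/eqP => [e|->] //; rewrite -(inordK ha) -(inordK hb) e. Qed.

Lemma pt3_ext (a b : pt 3) : c0 a = c0 b -> c1 a = c1 b -> c2 a = c2 b -> a = b.
Proof. by move=> h0 h1 h2; apply: functional_extensionality; apply: ord3_cases. Qed.

Lemma dot3_cross3 (g a v : pt 3) :
  dot3 g g * dot3 a v = dot3 (cross3 g a) (cross3 g v) + dot3 g a * dot3 g v.
Proof. rewrite /dot3 /cross3 /c0 /c1 /c2 /v3 !inordK //; ring. Qed.

Lemma dot3_eq0_of_cross3_eq0 (g a v : pt 3) : dot3 g g <> 0 ->
  (forall i, cross3 g a i = 0) -> dot3 g v = 0 -> dot3 a v = 0.
Proof.
move=> hg ha hv; have := dot3_cross3 g a v.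
have -> : dot3 (cross3 g a) (cross3 g v) = 0 by rewrite /dot3 /c0 /c1 /c2 !ha; ring.
by rewrite hv Rmult_0_r Rplus_0_r => /Rmult_integral [/hg|].
Qed.

Lemma dot3_self_eq0 (g : pt 3) : dot3 g g = 0 -> forall i, g i = 0.
Proof. rewrite /dot3 /c0 /c1 /c2 => h; apply: ord3_cases; nra. Qed.

Definition vjoin (a b : pt 3) : pt 6 := fun j =>
  match nat_of_ord j with
  | 0 => c0 a | 1 => c1 a | 2 => c2 a | 3 => c0 b | 4 => c1 b | _ => c2 b
  end%nat.

Ltac coords :=
  rewrite /dot3 /cross3 /M_of /gam_of /gam4 /s4 /join4 /vjoin /v3 /c0 /c1 /c2 ?inordK //=.

Lemma M_of_vjoin a b : M_of (vjoin a b) = a.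
Proof. by apply: pt3_ext; coords. Qed.

Lemma gam_of_vjoin a b : gam_of (vjoin a b) = b.
Proof. by apply: pt3_ext; coords. Qed.

Lemma vjoin_eq0 a b :
  (forall i, vjoin a b i = 0) <-> (forall k, a k = 0) /\ (forall k, b k = 0).
Proof.
split=> [H|[Ha Hb]]; last by apply: ord6_cases; rewrite /vjoin inordK //= /c0 /c1 /c2 ?Ha ?Hb.
split; apply: ord3_cases; [ have := H (inord 0) | have := H (inord 1) | have := H (inord 2)
  | have := H (inord 3) | have := H (inord 4) | have := H (inord 5) ]; by rewrite /vjoin inordK.
Qed.

Lemma gam4_join4 g s : gam4 (join4 g s) = g.
Proof. by apply: pt3_ext; coords. Qed.

Lemma s4_join4 g s : s4 (join4 g s) = s.
Proof. by coords. Qed.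

Lemma join4_gam4_s4 y : join4 (gam4 y) (s4 y) = y.
Proof. by apply: functional_extensionality; apply: ord4_cases; coords. Qed.

Definition psi (x : pt 6) : pt 4 := join4 (gam_of x) (dot3 (M_of x) (gam_of x)).

(* The point of the fibre of [psi] over (gamma, s) whose M is parallel to gamma. *)
Definition chi (y : pt 4) : pt 6 :=
  vjoin (fun k => s4 y / dot3 (gam4 y) (gam4 y) * gam4 y k) (gam4 y).

Lemma gam4_psi x : gam4 (psi x) = gam_of x.
Proof. exact: gam4_join4. Qed.

Lemma gam_of_chi y : gam_of (chi y) = gam4 y.
Proof. exact: gam_of_vjoin. Qed.

Lemma psi_chi y : dot3 (gam4 y) (gam4 y) <> 0 -> psi (chi y) = y.
Proof.
rewrite /psi /chi M_of_vjoin gam_of_vjoin => hy.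
apply: eq_trans (join4_gam4_s4 y); congr join4.
by move: hy; rewrite /dot3 /c0 /c1 /c2 /= => hy; field.
Qed.

Lemma psi_coords y :
  [/\ psi y (inord 0) = y (inord 3), psi y (inord 1) = y (inord 4), psi y (inord 2) = y (inord 5)
    & psi y (inord 3) = y (inord 0) * y (inord 3) + y (inord 1) * y (inord 4)
                        + y (inord 2) * y (inord 5)].
Proof. by rewrite /psi; coords. Qed.

Definition dpsi (x : pt 6) (i : 'I_6) (l : nat) : R :=
  let d j := kron (inord j) i in
  match l with
  | 0%nat => d 3%nat | 1%nat => d 4%nat | 2%nat => d 5%nat
  | _ => d 0%nat * x (inord 3) + x (inord 0) * d 3%nat
         + (d 1%nat * x (inord 4) + x (inord 1) * d 4%nat)
         + (d 2%nat * x (inord 5) + x (inord 2) * d 5%nat)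
  end.

Lemma partial_psi x i l : (l < 4)%N ->
  derivable_pt_lim (fun t => psi (upd x i t) (inord l)) (x i) (dpsi x i l).
Proof.
case: l => [|[|[|[|?]]]] // _.
- by apply: derivable_pt_lim_ext (partial_proj _ x i (inord 3)) => t;
    case: (psi_coords (upd x i t)).
- by apply: derivable_pt_lim_ext (partial_proj _ x i (inord 4)) => t;
    case: (psi_coords (upd x i t)).
- by apply: derivable_pt_lim_ext (partial_proj _ x i (inord 5)) => t;
    case: (psi_coords (upd x i t)).
- have := derivable_pt_lim_plus _ _ _ _ _ (derivable_pt_lim_plus _ _ _ _ _
    (derivable_pt_lim_mult _ _ _ _ _ (partial_proj _ x i (inord 0)) (partial_proj _ x i (inord 3)))
    (derivable_pt_lim_mult _ _ _ _ _ (partial_proj _ x i (inord 1)) (partial_proj _ x i (inord 4))))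
    (derivable_pt_lim_mult _ _ _ _ _ (partial_proj _ x i (inord 2)) (partial_proj _ x i (inord 5))).
  rewrite /= !upd_id; apply: derivable_pt_lim_ext => t.
  by case: (psi_coords (upd x i t)).
Qed.

Definition pullback_grad (x : pt 6) (dF : pt 4) : pt 6 :=
  vjoin (fun k => s4 dF * gam_of x k) (fun k => gam4 dF k + s4 dF * M_of x k).

Lemma rsum_dpsi x dF i :
  rsum 4 (fun l => dF (inord l) * dpsi x i l) = pullback_grad x dF i.
Proof.
move: i; apply: ord6_cases; rewrite /rsum /dpsi /pullback_grad; coords;
  by rewrite /kron ?inord_eqE //=; ring.
Qed.

Lemma Pi_pullback_grad M g mu s b i :
  mulv6 (Pi M g mu) (vjoin (fun k => s * g k) (fun k => b k + s * M k)) i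
  = vjoin (fun k => - cross3 g (fun k => s * mu k - b k) k) (fun _ => 0) i.
Proof. by move: i; apply: ord6_cases; rewrite /mulv6 /Pi; coords; ring. Qed.

Lemma gam_of_Pi M g mu v : gam_of (mulv6 (Pi M g mu) v) = cross3 g (M_of v).
Proof. by apply: pt3_ext; rewrite /mulv6 /Pi; coords; ring. Qed.

Lemma rsum6_dot3 p w : rsum 6 (fun k => p (inord k) * w (inord k))
  = dot3 (M_of p) (M_of w) + dot3 (gam_of p) (gam_of w).
Proof. rewrite /rsum; coords; ring. Qed.

Lemma derivable_pt_lim_affine a b t : derivable_pt_lim (fun t => a + t * b) t b.
Proof.
have := derivable_pt_lim_plus _ _ t _ _ (derivable_pt_lim_const a t)
  (derivable_pt_lim_mult _ _ t _ _ (derivable_pt_lim_id t) (derivable_pt_lim_const b t)).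
rewrite /= /id /fct_cte Rplus_0_l Rmult_1_l Rmult_0_r Rplus_0_r.
exact: derivable_pt_lim_ext.
Qed.

Section CasimirFunctions.
Variables (D : pt 3 -> Prop) (nu : pt 4 -> pt 3).
Hypotheses (HD : is_open D) (HD0 : forall g, D g -> ~ (forall i, g i = 0)).

Lemma open_Omega : is_open (Omega D).
Proof.
move=> x Dx; case: (HD _ Dx) => d [hd Hd]; exists d; split=> // y Hy.
by apply: Hd; apply: ord3_cases; rewrite /gam_of /v3 !inordK.
Qed.

Lemma open_DxR : is_open (DxR D).
Proof.
move=> x Dx; case: (HD _ Dx) => d [hd Hd]; exists d; split=> // y Hy.
by apply: Hd; apply: ord3_cases; rewrite /gam4 /v3 !inordK.
Qed.

Lemma DxR_psi x : DxR D (psi x) = Omega D x.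
Proof. by rewrite /DxR gam4_psi. Qed.

Lemma Omega_chi y : Omega D (chi y) = DxR D y.
Proof. by rewrite /Omega gam_of_chi. Qed.

Lemma dot3_gam4_neq0 y : DxR D y -> dot3 (gam4 y) (gam4 y) <> 0.
Proof. by move=> Dy /dot3_self_eq0; apply: HD0. Qed.

Lemma chi_smooth j : smooth_on (DxR D) (fun y => chi y j).
Proof.
move=> k; move: j; apply: ord6_cases; rewrite /chi; coords; rewrite /Rdiv;
  try apply: Ck_proj.
all: apply Ck_mult; [apply Ck_mult; [apply Ck_proj | apply Ck_inv] | apply Ck_proj].
all: try by move=> y /dot3_gam4_neq0; coords.
all: by repeat apply Ck_plus; apply Ck_mult; apply Ck_proj.
Qed.

Lemma partial_pullback F Fp : (forall j y, DxR D y -> partial_is F j y (Fp j y)) ->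
  (forall j, cont_on (DxR D) (Fp j)) -> forall C x, Omega D x ->
  (forall x', Omega D x' -> C x' = F (psi x')) ->
  forall i, partial_is C i x (pullback_grad x (fun j => Fp j (psi x)) i).
Proof.
move=> HFp HFc C x Ox HCF i.
have := chain_rule _ (DxR D) F Fp open_DxR HFp HFc (fun t => psi (upd x i t)) (x i) (dpsi x i).
rewrite upd_id DxR_psi (rsum_dpsi x (fun j => Fp j (psi x))).
move=> /(_ Ox (fun l hl => partial_psi x i l hl)).
case: (upd_near _ (Omega D) x i open_Omega Ox) => d [hd Hd].
apply: (derivable_pt_lim_locally_ext _ _ _ (x i - d) (x i + d)); first lra.
move=> t ht; rewrite HCF //; apply: Hd; split_Rabs; lra.
Qed.

Lemma Pi_pullback_grad_eq0 x dF :
  (forall i, mulv6 (Pi (M_of x) (gam_of x) (mu_of nu x)) (pullback_grad x dF) i = 0) <->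
  (forall k, cross3 (gam4 (psi x)) (fun k => dF (inord 3) * nu (psi x) k - gam4 dF k) k = 0).
Proof.
have E i : mulv6 (Pi (M_of x) (gam_of x) (mu_of nu x)) (pullback_grad x dF) i
  = vjoin (fun k => - cross3 (gam_of x) (fun k => dF (inord 3) * nu (psi x) k - gam4 dF k) k)
      (fun _ => 0) i := Pi_pullback_grad _ _ _ _ _ i.
rewrite gam4_psi; split=> H.
- have /vjoin_eq0 [H' _] : forall i, vjoin
      (fun k => - cross3 (gam_of x) (fun k => dF (inord 3) * nu (psi x) k - gam4 dF k) k)
      (fun _ => 0) i = 0 by move=> i; rewrite -E.
  by move=> k; have := H' k; lra.
- move=> i; rewrite E; move: i; apply/vjoin_eq0; split=> k //.
  by rewrite H Ropp_0.
Qed.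

Lemma casimir_of_factorization F C : Ck 1 (DxR D) F ->
  (forall x, Omega D x -> C x = F (psi x)) ->
  (forall y, DxR D y -> forall dF : pt 4, (forall j, partial_is F j y (dF j)) ->
     forall i : 'I_3, cross3 (gam4 y) (fun k => dF (inord 3) * nu y k - gam4 dF k) i = 0) ->
  casimir D nu C.
Proof.
move=> [_ HF1] HCF Hcross x Ox gradC HgC.
have [Fp HFp] := functional_choice _ HF1.
have HgF := partial_pullback F Fp (fun j => proj1 (HFp j)) (fun j => proj2 (HFp j)) C x Ox HCF.
have -> : gradC = pullback_grad x (fun j => Fp j (psi x)).
  by apply: functional_extensionality => i; exact: uniqueness_limite (HgC i) (HgF i).
apply/Pi_pullback_grad_eq0; apply: Hcross; first by rewrite DxR_psi.
by move=> j; apply: (proj1 (HFp j)); rewrite DxR_psi.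
Qed.

Lemma casimir_cross3_grad_M C x gradC : casimir D nu C -> Omega D x ->
  (forall i, partial_is C i x (gradC i)) -> forall k, cross3 (gam_of x) (M_of gradC) k = 0.
Proof.
move=> Hcas Ox HgC; rewrite -(gam_of_Pi (M_of x) _ (mu_of nu x)).
by apply: ord3_cases; rewrite /gam_of /v3 inordK //; apply: Hcas.
Qed.

(* Along the segment from [x] to [y] only M moves, in a direction orthogonal to gamma, while
   the M-gradient of [C] is parallel to gamma. *)
Lemma const_on_psi_fibres C Cp : (forall j y, Omega D y -> partial_is C j y (Cp j y)) ->
  (forall j, cont_on (Omega D) (Cp j)) ->
  (forall x, Omega D x -> forall k, cross3 (gam_of x) (M_of (fun j => Cp j x)) k = 0) ->
  forall x y, Omega D x -> psi y = psi x -> C y = C x.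
Proof.
move=> HCp HCc Hpar x y Ox Exy.
have Egam : gam_of y = gam_of x by rewrite -gam4_psi Exy gam4_psi.
have Edot : dot3 (M_of y) (gam_of y) = dot3 (M_of x) (gam_of x).
  by rewrite -(s4_join4 (gam_of y) (dot3 (M_of y) (gam_of y))) -/(psi y) Exy s4_join4.
set w := fun j => y j - x j; set seg := fun t j => x j + t * w j.
have gam_w : forall k, gam_of w k = 0.
  move: (f_equal c0 Egam) (f_equal c1 Egam) (f_equal c2 Egam); coords => h3 h4 h5.
  by apply: ord3_cases; coords; rewrite /w ?h3 ?h4 ?h5 Rminus_diag.
have gam_seg t : gam_of (seg t) = gam_of x.
  by apply: pt3_ext; move: (gam_w (inord 0)) (gam_w (inord 1)) (gam_w (inord 2));
    rewrite /seg; coords => h3 h4 h5; rewrite ?h3 ?h4 ?h5; ring.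
have Oseg t : Omega D (seg t) by rewrite /Omega gam_seg.
have Dseg t : derivable_pt_lim (fun t => C (seg t)) t 0.
  set p := fun j => Cp j (seg t).
  have Mw : dot3 (gam_of x) (M_of w) = 0.
    by move: Edot; rewrite Egam /w; coords => Edot; lra.
  have <- : dot3 (M_of p) (M_of w) + dot3 (gam_of p) (gam_of w) = 0.
    rewrite (dot3_eq0_of_cross3_eq0 (gam_of x)) //.
    - by rewrite /dot3 /c0 /c1 /c2 !gam_w; ring.
    - by rewrite -gam4_psi; apply: dot3_gam4_neq0; rewrite DxR_psi.
    - by rewrite -(gam_seg t); apply: Hpar.
  rewrite -rsum6_dot3.
  exact: chain_rule _ (Omega D) C Cp open_Omega HCp HCc seg t (fun l => w (inord l)) (Oseg t)
    (fun l _ => derivable_pt_lim_affine _ _ t).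
have [c [hc _]] : exists c, C (seg 1) - C (seg 0) = 0 * (1 - 0) /\ 0 < c < 1.
  by apply: (MVT_cor2 (fun t => C (seg t)) (fun _ => 0)) => [|c _]; [lra | exact: Dseg].
have E1 : seg 1 = y by apply: functional_extensionality => j; rewrite /seg /w; ring.
have E0 : seg 0 = x by apply: functional_extensionality => j; rewrite /seg; ring.
rewrite E1 E0 in hc; lra.
Qed.

Lemma casimir_factors C : smooth_on (Omega D) C -> casimir D nu C ->
  exists F : pt 4 -> R, smooth_on (DxR D) F /\
    (forall x, Omega D x -> C x = F (psi x)) /\
    (forall y, DxR D y -> forall dF : pt 4, (forall j, partial_is F j y (dF j)) ->
       forall i : 'I_3, cross3 (gam4 y) (fun k => dF (inord 3) * nu y k - gam4 dF k) i = 0).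
Proof.
move=> HC Hcas; have [Cp HCp] := functional_choice _ (proj2 (HC 1%N)).
have HCF x : Omega D x -> C x = C (chi (psi x)).
  move=> Ox; symmetry; apply: (const_on_psi_fibres C Cp) => //.
  - by move=> j; apply: (proj1 (HCp j)).
  - by move=> j; apply: (proj2 (HCp j)).
  - move=> x' Ox'; apply: (casimir_cross3_grad_M C) => // i; exact: (proj1 (HCp i)).
  - by rewrite psi_chi //; apply: dot3_gam4_neq0; rewrite DxR_psi.
have HFs : smooth_on (DxR D) (fun y => C (chi y)).
  move=> k; apply: (Ck_comp _ _ (DxR D) (Omega D) chi open_Omega) => // [y|].
  - by rewrite Omega_chi.
  - exact: chi_smooth.
exists (fun y => C (chi y)); split=> //; split=> // y Dy dF HdF.
have [Fp HFp] := functional_choice _ (proj2 (HFs 1%N)).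
have Ox : Omega D (chi y) by rewrite Omega_chi.
have py : psi (chi y) = y by apply: psi_chi; apply: dot3_gam4_neq0.
have HgC := partial_pullback _ Fp (fun j => proj1 (HFp j)) (fun j => proj2 (HFp j)) C _ Ox HCF.
have -> : dF = fun j => Fp j (psi (chi y)).
  apply: functional_extensionality => j; rewrite py.
  exact: uniqueness_limite (HdF j) (proj1 (HFp j) y Dy).
have := proj1 (Pi_pullback_grad_eq0 (chi y) (fun j => Fp j (psi (chi y)))) (Hcas _ Ox _ HgC).
by rewrite py.
Qed.

Lemma casimir_half_sq_norm : casimir D nu (fun x => / 2 * dot3 (gam_of x) (gam_of x)).
Proof.
set F := fun y => / 2 * dot3 (gam4 y) (gam4 y).
apply: (casimir_of_factorization F) => [|x _|y _ dF HdF].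
- rewrite /F /dot3 /gam4 /c0 /c1 /c2 /v3 !inordK //; apply Ck_mult; first exact: Ck_const.
  by repeat apply Ck_plus; apply Ck_mult; apply Ck_proj.
- by rewrite /F gam4_psi.
- have HF j : partial_is F j y
      (/ 2 * ((kron (inord 0) j * y (inord 0) + y (inord 0) * kron (inord 0) j)
        + (kron (inord 1) j * y (inord 1) + y (inord 1) * kron (inord 1) j)
        + (kron (inord 2) j * y (inord 2) + y (inord 2) * kron (inord 2) j))).
    have pp k := partial_proj _ y j (inord k).
    have := derivable_pt_lim_scal _ (/ 2) _ _ (derivable_pt_lim_plus _ _ _ _ _
      (derivable_pt_lim_plus _ _ _ _ _ (derivable_pt_lim_mult _ _ _ _ _ (pp 0%N) (pp 0%N))
        (derivable_pt_lim_mult _ _ _ _ _ (pp 1%N) (pp 1%N)))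
      (derivable_pt_lim_mult _ _ _ _ _ (pp 2%N) (pp 2%N))).
    rewrite /= !upd_id; apply: derivable_pt_lim_ext => t.
    by rewrite /F /mult_real_fct; coords.
  have dFE j := uniqueness_limite _ _ _ _ (HdF j) (HF j).
  by apply: ord3_cases; coords; rewrite !dFE /kron !inord_eqE //=; ring.
Qed.

End CasimirFunctions.

Theorem mainTheorem2 (D : pt 3 -> Prop) (nu : pt 4 -> pt 3) :
  is_open D ->
  (forall g, D g -> ~ (forall i, g i = 0)) ->
  (forall k : 'I_3, smooth_on (DxR D) (fun y => nu y k)) ->
  (forall C : pt 6 -> R, smooth_on (Omega D) C ->
     (casimir D nu C <->
      exists F : pt 4 -> R, smooth_on (DxR D) F /\
        (forall x, Omega D x -> C x = F (join4 (gam_of x) (dot3 (M_of x) (gam_of x)))) /\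
        (forall y, DxR D y -> forall dF : pt 4,
           (forall j, partial_is F j y (dF j)) ->
           forall i : 'I_3,
             cross3 (gam4 y)
               (fun k => dF (inord 3) * nu y k - gam4 dF k) i = 0)))
  /\ casimir D nu (fun x => / 2 * dot3 (gam_of x) (gam_of x)).
Proof.
move=> HD HD0 _; split; last exact: casimir_half_sq_norm.
move=> C HC; split; first exact: casimir_factors.
by case=> F [HF [HCF Hcross]]; apply: (casimir_of_factorization D nu HD F) => //; apply: HF.
Qed.
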